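(* Let $X$ be a finite cycle set and let $G(X)$ be its permutation group. Then the action of $G(X)$ on $X$ is not a Frobenius action; that is, $G(X)$ does not act on $X$ as a Frobenius group.
   Context: A cycle set is a set $X$ with a binary operation $\cdot$ such that for every $x\in X$ the map $\sigma(x)\colon X\to X$, $y\mapsto x\cdot y$, is bijective, and $(x\cdot y)\cdot(x\cdot z)=(y\cdot x)\cdot(y\cdot z)$ for all $x,y,z\in X$. The permutation group $G(X)$ is the subgroup of the symmetric group on $X$ generated by all $\sigma(x)$, $x\in X$. A group $G$ acting on a finite set $X$ acts as a Frobenius group if the action is transitive, every element $g\ne 1$ of $G$ fixes at most one point of $X$, and some element $g\neq 1$ fixes a point of $X$. *)

From mathcomp Require Import all_boot all_fingroup.
Set Implicit Arguments. Unset Strict Implicit. Unset Printing Implicit Defensive.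
Local Open Scope group_scope.

Definition is_cycle_set (X : finType) (op : X -> X -> X) : Prop :=
  (forall x, bijective (op x)) /\
  (forall x y z, op (op x y) (op x z) = op (op y x) (op y z)).

Definition sigma_perm (X : finType) (op : X -> X -> X)
  (inj : forall x, injective (op x)) (x : X) : {perm X} := perm (inj x).

Definition perm_group_cs (X : finType) (op : X -> X -> X)
  (inj : forall x, injective (op x)) : {group {perm X}} :=
  <<[set sigma_perm inj x | x : X]>>%G.

Definition frobenius_action (X : finType) (G : {set {perm X}}) : Prop :=
  [/\ forall x y : X, exists2 g, g \in G & g x = y,
      forall g, g \in G -> g != 1 -> forall x y : X, g x = x -> g y = y -> x = y
    & exists2 g, g \in G & g != 1 /\ exists x : X, g x = x].

(* G = G(X) carries the structure of a left brace: writing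
   g + h = g * lambda_g(h), where lambda_g(sigma_x1 + ... + sigma_xn) is
   sigma_(g x1) + ... + sigma_(g xn), makes G an abelian group on which G acts
   by the automorphisms lambda_g.  Hence every additive pi-core is a subgroup
   of G under composition, and a pi-group there.
   Assume G acts as a Frobenius group.  For a prime p dividing a point
   stabiliser, p does not divide |X|, since a p-subgroup fixing exactly one
   point fixes |X| = 1 points mod p.  So the additive p-core fixes a point x.
   Let q be a prime divisor of |X| and w the additive q-part of sigma_x.  For
   a nontrivial additive p-element a, lambda_a fixes w, and evaluating
   a + w = w + a at x shows that lambda_w(a) fixes both x and w(x); thus
   w(x) = x and w = 1.  By transitivity every sigma_y = lambda_g(sigma_x) has
   trivial additive q-part, so G is a q'-group, although q | |X| | |G|. *)

From HB Require Import structures.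
From mathcomp Require Import all_boot all_fingroup all_solvable.
Set Implicit Arguments. Unset Strict Implicit. Unset Printing Implicit Defensive.
Local Open Scope group_scope.

Section FixedPoints.
Variable X : finType.

Lemma acts_on_setT (A : {group {perm X}}) : [acts A, on [set: X] | 'P].
Proof. by apply/actsP => a _ x; rewrite !inE. Qed.

Lemma pgroup_fixpoint (p : nat) (A : {group {perm X}}) :
  p.-group A -> ~~ (p %| #|X|) -> exists x, forall a, a \in A -> a x = x.
Proof.
move=> pA p'X; have := pgroup_fix_mod pA (acts_on_setT A); rewrite cardsT.
have [-> | [x /setIP [_ /afixP fixA]]] := set_0Vmem 'Fix_([set: X] | 'P)(A).
  by rewrite cards0 mod0n => /eqP pX; case/negP: p'X.
by exists x.
Qed.

Lemma card_dvd_transitive (G : {group {perm X}}) x :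
  (forall y, exists2 g, g \in G & g x = y) -> #|X| %| #|G|.
Proof.
move=> trans; have orbitT : orbit 'P G x = [set: X].
  by apply/setP => y; rewrite inE; have [g Gg <-] := trans y; apply/orbitP; exists g.
by rewrite -cardsT -orbitT dvdn_orbit.
Qed.

Variable G : {group {perm X}}.
Hypothesis fix_le1 :
  forall g, g \in G -> g != 1 -> forall x y : X, g x = x -> g y = y -> x = y.

Lemma fixing_p_elt_trivial q g x :
  prime q -> q %| #|X| -> q.-elt g -> g \in G -> g x = x -> g = 1.
Proof.
move=> q_pr qX qg Gg gx; apply/eqP/negPn/negP => ntg.
have fix_g : 'Fix_([set: X] | 'P)(<[g]>) = [set x].
  apply/setP => y; rewrite setTI afix_cycle in_set1; apply/afix1P/eqP => [gy | ->] //.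
  exact: fix_le1 gy gx.
have := pgroup_fix_mod qg (acts_on_setT _); rewrite cardsT fix_g cards1.
by move=> /eqP; rewrite (eqP qX) eq_sym modn_small ?prime_gt1.
Qed.

Lemma stab_prime_ndvd p x :
  prime p -> p %| #|'C_G[x | 'P]| -> ~~ (p %| #|X|).
Proof.
move=> p_pr p_stab; apply/negP => pX.
have [u /setIP [Gu /astab1P ux] ou] := Cauchy p_pr p_stab.
have pu : p.-elt u by rewrite /p_elt ou pnat_id.
have := fixing_p_elt_trivial p_pr pX pu Gu ux.
by move/(congr1 order); rewrite ou order1 => p1; rewrite p1 in p_pr.
Qed.

End FixedPoints.

Section CycleSetBrace.
Variables (X : finType) (op : X -> X -> X) (inj : forall x, injective (op x)).
Hypothesis cycle_law : forall x y z, op (op x y) (op x z) = op (op y x) (op y z).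

Local Notation G := (perm_group_cs inj).
Local Notation sigma := (sigma_perm inj).

Lemma sigmaE x y : sigma x y = op x y.
Proof. by rewrite permE. Qed.

Lemma mem_sigma x : sigma x \in G.
Proof. by rewrite mem_gen ?imset_f. Qed.

Lemma sigma_cycle_law x y : sigma x * sigma (sigma x y) = sigma y * sigma (sigma y x).
Proof. by apply/permP => z; rewrite !permM !sigmaE cycle_law. Qed.

(* [word_perm s] is the brace sum of the sigma_y, y in s; the cycle set law
   makes it invariant under permutations of s. *)
Definition word_step (g : {perm X}) (y : X) := g * sigma (g y).
Definition word_perm (s : seq X) := foldl word_step 1 s.

Lemma foldl_word_step g s : foldl word_step g s = g * word_perm (map g s).
Proof.
elim/last_ind: s => [|s y IHs]; first by rewrite mulg1.
rewrite map_rcons /word_perm !foldl_rcons -/(word_perm _) IHs.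
by rewrite /word_step mulgA permM.
Qed.

Lemma word_perm_cat s t : word_perm (s ++ t) = word_perm s * word_perm (map (word_perm s) t).
Proof. by rewrite /word_perm foldl_cat foldl_word_step. Qed.

Lemma word_perm_rcons s y : word_perm (rcons s y) = word_perm s * sigma (word_perm s y).
Proof. by rewrite /word_perm foldl_rcons. Qed.

Lemma word_perm1 y : word_perm [:: y] = sigma y.
Proof. by rewrite /word_perm /= /word_step perm1 mul1g. Qed.

Lemma word_perm_pairC a b : word_perm [:: a; b] = word_perm [:: b; a].
Proof.
rewrite -[[:: a; b]]/(rcons [:: a] b) -[[:: b; a]]/(rcons [:: b] a).
by rewrite !word_perm_rcons !word_perm1 sigma_cycle_law.
Qed.

Lemma word_perm_swap p a b u :
  word_perm (p ++ [:: a, b & u]) = word_perm (p ++ [:: b, a & u]).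
Proof.
have -> : p ++ [:: a, b & u] = (p ++ [:: a; b]) ++ u by rewrite -catA.
have -> : p ++ [:: b, a & u] = (p ++ [:: b; a]) ++ u by rewrite -catA.
by rewrite !(word_perm_cat (p ++ _)) !word_perm_cat /= word_perm_pairC.
Qed.

Lemma word_perm_move p t y u :
  word_perm (p ++ t ++ y :: u) = word_perm (p ++ y :: t ++ u).
Proof.
elim: t p => [|a t IHt] p //=.
by rewrite -cat_rcons IHt cat_rcons word_perm_swap.
Qed.

Lemma word_perm_catC s t : word_perm (s ++ t) = word_perm (t ++ s).
Proof.
elim: s t => [|a s IHs] t /=; first by rewrite cats0.
have := word_perm_move [::] (s ++ t) a [::]; rewrite /= cats0 => <-.
by rewrite -catA IHs -catA.
Qed.

Lemma mem_word_perm s : word_perm s \in G.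
Proof.
elim/last_ind: s => [|s y IHs]; first exact: group1.
by rewrite word_perm_rcons groupM ?mem_sigma.
Qed.

Lemma word_perm_onto g : g \in G -> exists s, word_perm s = g.
Proof.
move=> /gen_prodgP [n [c c_sigma ->]]; elim: n c c_sigma => [|n IHn] c c_sigma.
  by exists [::]; rewrite big_ord0.
rewrite big_ord_recr /=.
have [s <-] := IHn (fun i => c (widen_ord (leqnSn n) i)) (fun i => c_sigma _).
have /imsetP [z _ ->] := c_sigma ord_max.
by exists (rcons s ((word_perm s)^-1 z)); rewrite word_perm_rcons permKV.
Qed.

Lemma word_perm_map r s :
  word_perm (map (word_perm r) s) =
    (word_perm r)^-1 * (word_perm s * word_perm (map (word_perm s) r)).
Proof.
by have := word_perm_cat r s; rewrite word_perm_catC word_perm_cat => ->; rewrite mulKg.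
Qed.

Lemma word_perm_map_eq g s t :
  g \in G -> word_perm s = word_perm t -> word_perm (map g s) = word_perm (map g t).
Proof.
by move=> /word_perm_onto [r <-] st; rewrite (word_perm_map r s) (word_perm_map r t) st.
Qed.

(* The group law of [brace] is the brace addition a + b = a * lambda_a(b). *)
Definition brace := {g : {perm X} | g \in G}.
HB.instance Definition _ := Finite.on brace.
HB.instance Definition _ := SubFinite.on brace.

Definition brace_word (s : seq X) : brace := exist _ (word_perm s) (mem_word_perm s).

Lemma brace_wordP (a : brace) : exists s, brace_word s == a.
Proof. by have [s sa] := word_perm_onto (valP a); exists s; apply/eqP/val_inj. Qed.

Definition word_of (a : brace) : seq X := xchoose (brace_wordP a).

Lemma word_ofK : cancel word_of brace_word.
Proof. by move=> a; apply/eqP/(xchooseP (brace_wordP a)). Qed.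

Lemma brace_word_onto (a : brace) : exists s, a = brace_word s.
Proof. by exists (word_of a); rewrite word_ofK. Qed.

Definition lambda (g : {perm X}) (a : brace) : brace := brace_word (map g (word_of a)).

Lemma lambda_word g s : g \in G -> lambda g (brace_word s) = brace_word (map g s).
Proof.
move=> Gg; apply: val_inj; apply: word_perm_map_eq => //.
by rewrite -[RHS]/(val (brace_word s)) -{2}(word_ofK (brace_word s)).
Qed.

Lemma lambda_id a : lambda 1 a = a.
Proof. by rewrite -(word_ofK a) lambda_word ?group1 // (eq_map (@perm1 X)) map_id. Qed.

Lemma lambdaM g h a : g \in G -> h \in G -> lambda (g * h) a = lambda h (lambda g a).
Proof.
move=> Gg Gh; rewrite -(word_ofK a) !lambda_word ?groupM // -map_comp.
by congr brace_word; apply: eq_map => y; rewrite permM.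
Qed.

Definition brace_add (a b : brace) : brace :=
  exist _ (val a * val (lambda (val a) b)) (groupM (valP a) (valP _)).

Lemma brace_add_word s t : brace_add (brace_word s) (brace_word t) = brace_word (s ++ t).
Proof.
apply: val_inj; rewrite -[LHS]/(word_perm s * val (lambda (word_perm s) (brace_word t))).
by rewrite lambda_word ?mem_word_perm //= word_perm_cat.
Qed.

Definition brace_zero : brace := brace_word [::].

Definition brace_opp (a : brace) : brace :=
  lambda (val a)^-1 (exist _ (val a)^-1 (groupVr (valP a))).

Lemma brace_addA : associative brace_add.
Proof.
move=> a b c.
have [s ->] := brace_word_onto a; have [t ->] := brace_word_onto b.
have [u ->] := brace_word_onto c.
rewrite (brace_add_word s) (brace_add_word t) (brace_add_word (s ++ t)).
by rewrite brace_add_word catA.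
Qed.

Lemma brace_addC : commutative brace_add.
Proof.
move=> a b; have [s ->] := brace_word_onto a; have [t ->] := brace_word_onto b.
by rewrite !brace_add_word; apply: val_inj; apply: word_perm_catC.
Qed.

Lemma brace_add0 : left_id brace_zero brace_add.
Proof. by move=> a; have [s ->] := brace_word_onto a; rewrite brace_add_word. Qed.

Lemma brace_addNr : right_inverse brace_zero brace_opp brace_add.
Proof.
move=> a; apply: val_inj.
rewrite -[LHS]/(val a * val (lambda (val a) (brace_opp a))) -lambdaM ?groupV ?(valP a) //.
by rewrite mulVg lambda_id; apply: mulgV.
Qed.

Lemma brace_addNl : left_inverse brace_zero brace_opp brace_add.
Proof. by move=> a; rewrite brace_addC brace_addNr. Qed.

HB.instance Definition _ := Finite_isGroup.Build brace brace_addA brace_add0 brace_addNl.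

Lemma val_brace_mul (a b : brace) : val (a * b) = val a * val (lambda (val a) b).
Proof. by []. Qed.

Lemma brace_word_mul s t : brace_word s * brace_word t = brace_word (s ++ t).
Proof. exact: brace_add_word. Qed.

Lemma brace_abelian : abelian [set: brace].
Proof. by apply/centsP => a _ b _; apply: brace_addC. Qed.

Lemma card_brace : #|[set: brace]| = #|G|.
Proof. by rewrite cardsT card_sig. Qed.

Lemma lambda1 g : g \in G -> lambda g 1 = 1.
Proof. exact: lambda_word [::]. Qed.

Lemma lambda_morph g : g \in G -> {morph lambda g : a b / a * b}.
Proof.
move=> Gg a b; have [s ->] := brace_word_onto a; have [t ->] := brace_word_onto b.
by rewrite brace_word_mul !lambda_word // map_cat brace_word_mul.
Qed.

Lemma lambdaK g : g \in G -> cancel (lambda g) (lambda g^-1).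
Proof. by move=> Gg a; rewrite -lambdaM ?groupV // mulgV lambda_id. Qed.

Lemma lambda_inj g : g \in G -> injective (lambda g).
Proof. by move=> Gg; apply: can_inj (lambdaK Gg). Qed.

Lemma lambda_morphic g : g \in G -> morphic [set: brace] (lambda g).
Proof. by move=> Gg; apply/morphicP => a b _ _; apply: lambda_morph. Qed.

Lemma lambda_constt g pi a : g \in G -> lambda g a.`_pi = (lambda g a).`_pi.
Proof.
by move=> Gg; apply: (morph_constt (morphm_morphism (lambda_morphic Gg))); rewrite inE.
Qed.

Lemma lambda_p_elt g pi a : g \in G -> pi.-elt (lambda g a) = pi.-elt a.
Proof.
move=> Gg; have inj_g : 'injm (morphm_morphism (lambda_morphic Gg)).
  by apply/injmP => b c _ _; apply: lambda_inj.
by rewrite /p_elt -[lambda g a]/(morphm (lambda_morphic Gg) a) (order_injm inj_g) ?inE.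
Qed.

Definition brace_sigma (x : X) : brace := brace_word [:: x].

Lemma val_brace_sigma x : val (brace_sigma x) = sigma x.
Proof. exact: word_perm1. Qed.

Lemma lambda_sigma g x : g \in G -> lambda g (brace_sigma x) = brace_sigma (g x).
Proof. exact: lambda_word. Qed.

Lemma left_ideal_group_set (A : {group brace}) :
  (forall g a, g \in G -> a \in A -> lambda g a \in A) -> group_set (val @: A).
Proof.
move=> lambdaA; apply/group_setP; split; first by apply/imsetP; exists (1 : brace).
move=> _ _ /imsetP [a Aa ->] /imsetP [b Ab ->]; apply/imsetP.
exists (a * lambda (val a)^-1 b); first by rewrite groupM // lambdaA ?groupV ?(valP a).
by rewrite val_brace_mul -lambdaM ?groupV ?(valP a) // mulVg lambda_id.
Qed.

Lemma mem_pcore_brace pi (a : brace) : (a \in 'O_pi([set: brace])) = pi.-elt a.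
Proof.
have hallO := nilpotent_pcore_Hall pi (abelian_nil brace_abelian).
by rewrite (mem_normal_Hall hallO (pcore_normal _ _)) ?inE.
Qed.

Lemma lambda_pcore pi g a :
  g \in G -> a \in 'O_pi([set: brace]) -> lambda g a \in 'O_pi([set: brace]).
Proof. by move=> Gg; rewrite !mem_pcore_brace lambda_p_elt. Qed.

Definition mul_pcore pi : {group {perm X}} :=
  Group (left_ideal_group_set (@lambda_pcore pi)).

Lemma mem_mul_pcore pi (a : brace) : (val a \in mul_pcore pi) = pi.-elt a.
Proof. by rewrite /= mem_imset ?mem_pcore_brace //; apply: val_inj. Qed.

Lemma mul_pcore_pgroup pi : pi.-group (mul_pcore pi).
Proof. by rewrite /pgroup card_imset; [apply: pcore_pgroup | apply: val_inj]. Qed.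

Lemma p_elt_fixpoint (p : nat) :
  ~~ (p %| #|X|) -> exists x, forall a : brace, p.-elt a -> val a x = x.
Proof.
move=> p'X; have [x fix_x] := pgroup_fixpoint (mul_pcore_pgroup p) p'X.
by exists x => a pa; apply: fix_x; rewrite mem_mul_pcore.
Qed.

Lemma constt_sigma1_q'group q x :
  (forall y, exists2 g, g \in G & g x = y) -> (brace_sigma x).`_q = 1 -> q^'.-group G.
Proof.
move=> trans sx1; apply: pgroupS (mul_pcore_pgroup q^').
rewrite gen_subG; apply/subsetP => _ /imsetP [y _ ->]; have [g Gg <-] := trans y.
rewrite -val_brace_sigma mem_mul_pcore; apply/constt1P.
by rewrite -lambda_sigma // -lambda_constt // sx1 lambda1.
Qed.

Hypothesis fix_le1 :
  forall g, g \in G -> g != 1 -> forall x y : X, g x = x -> g y = y -> x = y.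

Lemma fix_of_lambda_invariant (p : nat) x (a w : brace) :
  (forall b : brace, p.-elt b -> val b x = x) -> p.-elt a -> a != 1 ->
  lambda (val a) w = w -> val w x = x.
Proof.
move=> fix_x pa nta law; set b := lambda (val w) a.
have Ewx : val w x = val b (val w x).
  have aw : a * w = w * a by apply: (centsP brace_abelian); rewrite inE.
  have E : val (a * w) x = val (w * a) x by rewrite aw.
  by rewrite !val_brace_mul !permM law (fix_x a pa) in E.
have ntb : val b != 1.
  apply: contra nta => /eqP b1; apply/eqP/(lambda_inj (valP w)).
  by rewrite lambda1 ?(valP w) //; apply: val_inj.
have bx : val b x = x by apply: fix_x; rewrite lambda_p_elt ?(valP w).
exact: esym (fix_le1 (valP b) ntb bx (esym Ewx)).
Qed.

Lemma sigma_constt_trivial (p q : nat) x :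
  prime p -> p %| #|G| -> prime q -> q %| #|X| ->
  (forall b : brace, p.-elt b -> val b x = x) -> (brace_sigma x).`_q = 1.
Proof.
move=> p_pr pG q_pr qX fix_x.
have [a _ oa] := Cauchy p_pr (etrans (congr1 _ card_brace) pG).
have pa : p.-elt a by rewrite /p_elt oa pnat_id.
have nta : a != 1 by rewrite -order_gt1 oa prime_gt1.
set w := (brace_sigma x).`_q.
have law : lambda (val a) w = w.
  by rewrite lambda_constt ?(valP a) // lambda_sigma ?(valP a) // fix_x.
have qw : q.-elt (val w).
  by apply: mem_p_elt (mul_pcore_pgroup q) _; rewrite mem_mul_pcore p_elt_constt.
have wx := fix_of_lambda_invariant fix_x pa nta law.
by apply: val_inj; rewrite (fixing_p_elt_trivial fix_le1 q_pr qX qw (valP w) wx).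
Qed.

End CycleSetBrace.

Theorem theorem1 (X : finType) (op : X -> X -> X)
  (inj : forall x, injective (op x)) :
  is_cycle_set op -> ~ frobenius_action (perm_group_cs inj).
Proof.
move=> [_ cycle_law] [trans fix_le1 [g0 Gg0 [ntg0 [x0 g0x0]]]].
set G := perm_group_cs inj.
have [p p_pr p_stab] : exists2 p, prime p & p %| #|'C_G[x0 | 'P]|.
  have stab_gt1 : 1 < #|'C_G[x0 | 'P]|.
    apply/card_gt1P; exists 1, g0; rewrite group1 eq_sym ntg0 inE Gg0.
    by split=> //; apply/astab1P.
  by exists (pdiv #|'C_G[x0 | 'P]|); rewrite ?pdiv_prime ?pdiv_dvd.
have [q q_pr qX] : exists2 q, prime q & q %| #|X|.
  have X_gt1 : 1 < #|X|.
    rewrite ltnNge; apply: contra ntg0 => X_le1; apply/eqP/permP => y.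
    by rewrite perm1; apply: (card_le1_eqP X_le1).
  by exists (pdiv #|X|); rewrite ?pdiv_prime ?pdiv_dvd.
have p'X := stab_prime_ndvd fix_le1 p_pr p_stab.
have pG : p %| #|G| := dvdn_trans p_stab (cardSg (subsetIl _ _)).
have [x1 fix_x1] := p_elt_fixpoint inj cycle_law p'X.
have sx1 := sigma_constt_trivial fix_le1 p_pr pG q_pr qX fix_x1.
have q'G := constt_sigma1_q'group (trans x1) sx1.
have qG : q %| #|G| := dvdn_trans qX (card_dvd_transitive (trans x1)).
by have := pnat_dvd qG q'G; rewrite pnatE // !inE eqxx.
Qed.
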